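(* Let $b\ge 2$ be even, $n\ge 0$, and put $f_0=b^{b^n}+1$, $f_1=b^{b^{n+1}}+1$. Then $\mathrm{Ap}(SF(b,n),f_0)=\{0,f_1,2f_1,\dots,b^{b^n}f_1\}$, $F(SF(b,n)) = b^{b^n}f_1 - f_0 = b^{(b+1)b^{n}}-1$, and $g(SF(b,n))=\tfrac12\, b^{(b+1)b^{n}}$.
   Context: For an even integer $b\ge2$ and $n\ge0$, $SF(b,n)=\langle\{b^{b^{n+i}}+1:i\in\mathbb{N}\}\rangle$, the submonoid of $(\mathbb{N},+)$ generated by these numbers (a numerical semigroup). $\mathrm{Ap}(S,x)=\{s\in S:s-x\notin S\}$; $F(S)$ is the greatest integer not in $S$; the genus $g(S)$ is the cardinality of $\mathbb{N}\setminus S$. *)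

From mathcomp Require Import all_boot.
Set Implicit Arguments. Unset Strict Implicit. Unset Printing Implicit Defensive.

Inductive SF (b n : nat) : nat -> Prop :=
  | SF0 : SF b n 0
  | SFadd : forall (i s : nat), SF b n s -> SF b n (b ^ (b ^ (n + i)) + 1 + s).

(* Apery set Ap(S,x) = { s in S : s - x notin S } (integer subtraction:
   if s < x then s - x is negative, hence not in S). *)
Definition Apery (S : nat -> Prop) (x s : nat) : Prop :=
  S s /\ ~ (x <= s /\ S (s - x)).

Definition is_frobenius (S : nat -> Prop) (F : nat) : Prop :=
  ~ S F /\ (forall m, F < m -> S m).

Definition is_genus (S : nat -> Prop) (g : nat) : Prop :=
  exists l : seq nat, uniq l /\ (forall m, m \in l <-> ~ S m) /\ size l = g.

(* With [B = b ^ b ^ n], the generators of SF(b, n) are [B ^ (b ^ i) + 1]. Since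
   [B ^ 2 = 1 mod B + 1] and [b ^ i] is even for [i > 0], every generator beyond
   [f0 = B + 1] is congruent to [f1 = B ^ b + 1] modulo [f0] and at least [f1], so
   SF(b, n) = <f0, f1>. For coprime [a], [c] the semigroup <a, c> meets each residue
   class mod [a] first at some [k * c] with [k < a]; this yields Sylvester's Apery set
   and Frobenius number [a c - a - c], and the symmetry [m <-> F - m] of [0, F]
   between elements and gaps gives genus [(F + 1) / 2]. *)

From Stdlib Require Import FunctionalExtensionality PropExtensionality.
From mathcomp Require Import all_boot zify.

Set Implicit Arguments.
Unset Strict Implicit.
Unset Printing Implicit Defensive.

Definition natcomb2 (a c m : nat) : Prop := exists x y, m = x * a + y * c.

Definition natcomb2b (a c m : nat) : bool :=
  [exists x : 'I_m.+1, exists y : 'I_m.+1, m == x * a + y * c].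

Lemma natcomb2P a c m : 0 < a -> 0 < c -> reflect (natcomb2 a c m) (natcomb2b a c m).
Proof.
move=> a_gt0 c_gt0.
apply: (iffP existsP) => [[x /existsP [y /eqP exy]] | [x [y exy]]].
  by exists x, y.
have lt_xm : x < m.+1 by rewrite ltnS exy; nia.
have lt_ym : y < m.+1 by rewrite ltnS exy; nia.
by exists (Ordinal lt_xm); apply/existsP; exists (Ordinal lt_ym); apply/eqP.
Qed.

Lemma natcomb2_add a c m1 m2 :
  natcomb2 a c m1 -> natcomb2 a c m2 -> natcomb2 a c (m1 + m2).
Proof. by move=> [x1 [y1 ->]] [x2 [y2 ->]]; exists (x1 + x2), (y1 + y2); lia. Qed.

Lemma modnBr d m : d <= m -> m - d = m %[mod d].
Proof. by move=> le_dm; rewrite -[in RHS](subnK le_dm) modnDr. Qed.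

Lemma leq_add_eqn_mod d m n : m = n %[mod d] -> m < n -> m + d <= n.
Proof.
move=> emn ltmn; have : d %| n - m by rewrite -eqn_mod_dvd ?emn // ltnW.
by move=> /dvdn_leq; rewrite subn_gt0 => /(_ ltmn); lia.
Qed.

Lemma count_iota_rev (p : pred nat) n :
  count (fun i => p (n.-1 - i)) (iota 0 n) = count p (iota 0 n).
Proof.
rewrite -!sum1_count; have := big_nat_rev addn 0 0 n p (fun _ => 1).
rewrite /index_iota subn0 => ->; apply: eq_bigl => i.
by congr p; lia.
Qed.

Section Residues.
Variables a c : nat.
Hypothesis a_gt0 : 0 < a.
Hypothesis coprime_ac : coprime a c.

Lemma exists_mul_eqn_mod m : exists2 k, k < a & m = k * c %[mod a].
Proof.
have /dvdnP [j ejx] : c %| chinese a c m 0 by rewrite /dvdn chinese_modr ?mod0n.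
exists (j %% a); first by rewrite ltn_mod.
by rewrite modnMml -ejx chinese_modl.
Qed.

Lemma natcomb2E m k :
  k < a -> m = k * c %[mod a] -> natcomb2 a c m <-> k * c <= m.
Proof.
move=> lt_ka emk; split=> [[x [y exy]] | le_km].
  rewrite leqNgt; apply/negP => lt_mk.
  have lt_yk : y < k.
    rewrite ltnNge; apply/negP => le_ky; move: lt_mk.
    by rewrite exy ltnNge (leq_trans (leq_mul le_ky (leqnn c))) ?leq_addl.
  have : a %| (k - y) * c.
    rewrite mulnBl -eqn_mod_dvd; last by rewrite leq_mul2r ltnW ?orbT.
    by rewrite -emk exy modnMDl.
  rewrite Gauss_dvdl // => /dvdn_leq; rewrite subn_gt0 => /(_ lt_yk).
  by rewrite leqNgt (leq_ltn_trans (leq_subr y k)).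
have : a %| m - k * c by rewrite -eqn_mod_dvd // emk.
by case/dvdnP=> j ej; exists j, k; rewrite -ej subnK.
Qed.

Lemma apery_natcomb2 s : Apery (natcomb2 a c) a s <-> exists2 k, k < a & s = k * c.
Proof.
rewrite /Apery; split=> [[ins nsa] | [k lt_ka ->]].
  have [k lt_ka esk] := exists_mul_eqn_mod s.
  move: ins; rewrite (natcomb2E lt_ka esk) => le_ks.
  exists k => //; apply/eqP; rewrite eqn_leq le_ks andbT leqNgt.
  apply/negP => /(leq_add_eqn_mod (esym esk)) le_kas.
  have le_as : a <= s by lia.
  apply: nsa; split=> //.
  by rewrite (natcomb2E lt_ka) ?modnBr // leq_subRL // addnC.
rewrite (natcomb2E lt_ka erefl); split=> // [[le_as]].
by rewrite (natcomb2E lt_ka) ?modnBr //; lia.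
Qed.

End Residues.

Section TwoGenerators.
Variables a c : nat.
Hypothesis a_gt1 : 1 < a.
Hypothesis c_gt1 : 1 < c.
Hypothesis coprime_ac : coprime a c.

Let a_gt0 : 0 < a. Proof. exact: ltnW. Qed.
Let F := a * c - a - c.

Lemma frobenius_add_l : F + a = (a - 1) * c.
Proof. rewrite /F mulnBl mul1n; nia. Qed.

Lemma natcomb2_sym m : m <= F -> natcomb2 a c m <-> ~ natcomb2 a c (F - m).
Proof.
move=> le_mF; have [k lt_ka emk] := exists_mul_eqn_mod a_gt0 coprime_ac m.
have ekc : (a - 1 - k) * c + k * c = F + a.
  by rewrite -mulnDl subnK ?frobenius_add_l //; lia.
have eFm : F - m = (a - 1 - k) * c %[mod a].
  apply/eqP; rewrite -(eqn_modDr m) subnK // -modnDmr emk modnDmr ekc.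
  by rewrite modnDr.
rewrite (natcomb2E coprime_ac lt_ka emk) (natcomb2E coprime_ac _ eFm); last by lia.
split=> [le_km le_Fm | not_le]; first lia.
rewrite leqNgt; apply/negP => /(leq_add_eqn_mod emk) le_mak; apply: not_le; lia.
Qed.

Lemma frobenius_natcomb2 : is_frobenius (natcomb2 a c) F.
Proof.
split.
  by have /natcomb2_sym [+ _] := leq0n F; rewrite subn0; apply; exists 0, 0.
move=> m lt_Fm; have [k lt_ka emk] := exists_mul_eqn_mod a_gt0 coprime_ac m.
rewrite (natcomb2E coprime_ac lt_ka emk) leqNgt; apply/negP => lt_mk.
have : k * c <= F + a by rewrite frobenius_add_l leq_mul2r; apply/orP; right; lia.
by move: (leq_add_eqn_mod emk lt_mk); lia.
Qed.

Lemma genus_natcomb2 : is_genus (natcomb2 a c) (F.+1 %/ 2).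
Proof.
have natcomb2P' m := natcomb2P m a_gt0 (ltnW c_gt1).
have [_ gtF] := frobenius_natcomb2.
exists (filter (predC (natcomb2b a c)) (iota 0 F.+1)).
split; first by rewrite filter_uniq ?iota_uniq.
split.
  move=> m; rewrite mem_filter mem_iota /=; split; first by move=> /andP [/natcomb2P'].
  move=> nm; apply/andP; split; first by apply/natcomb2P'.
  by rewrite ltnS leqNgt; apply/negP => /gtF.
have count_eq : count (natcomb2b a c) (iota 0 F.+1)
              = count (predC (natcomb2b a c)) (iota 0 F.+1).
  rewrite -[LHS]count_iota_rev; apply: eq_in_count => i; rewrite mem_iota /= => lt_iF.
  have := natcomb2_sym (leq_subr i F); rewrite subKn // => sym.
  apply/idP/idP => [/natcomb2P' /sym ns | /negP ns].
    by apply/negP => /natcomb2P'.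
  by apply/natcomb2P'/sym => /natcomb2P'.
have := count_predC (natcomb2b a c) (iota 0 F.+1).
by rewrite size_iota count_eq size_filter; lia.
Qed.

End TwoGenerators.

Lemma expn_even_modS B e : 0 < B -> ~~ odd e -> B ^ e = 1 %[mod B + 1].
Proof.
move=> B_gt0 even_e; have sqrB : B ^ 2 = 1 %[mod B + 1].
  apply/eqP; rewrite eqn_mod_dvd ?expn_gt0 ?B_gt0 //.
  by rewrite -[X in _ %| _ - X](exp1n 2) subn_sqr dvdn_mull.
rewrite -(odd_double_half e) (negbTE even_e) add0n -muln2 mulnC expnM.
by rewrite -modnXm sqrB modnXm exp1n.
Qed.

Section FermatLikeSemigroup.
Variables b n : nat.
Hypothesis b_ge2 : 2 <= b.
Hypothesis b_even : ~~ odd b.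

Let B := b ^ b ^ n.

Lemma SF_base_gt1 : 1 < B.
Proof. by rewrite -(exp1n (b ^ n)) ltn_exp2r // expn_gt0; case: b b_ge2. Qed.

Lemma SF_gen_modS i : 0 < i -> b ^ b ^ (n + i) + 1 = B ^ b + 1 %[mod B + 1].
Proof.
have B_gt0 : 0 < B by rewrite ltnW ?SF_base_gt1.
move=> i_gt0; rewrite -modnDml -[RHS]modnDml expnD expnM -/B.
by rewrite !expn_even_modS // oddX negb_or b_even andbT -lt0n.
Qed.

Lemma SF_coprime_gens : coprime (B + 1) (B ^ b + 1).
Proof.
have B_gt1 := SF_base_gt1.
rewrite -coprime_modr -modnDml expn_even_modS ?modnDml ?modn_small; try lia.
by rewrite coprimen2 addn1 /= /B oddX negb_or b_even andbT -lt0n expn_gt0; case: b b_ge2.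
Qed.

Lemma SF_natcomb2 : SF b n = natcomb2 (B + 1) (B ^ b + 1).
Proof.
have B_gt1 := SF_base_gt1.
apply: functional_extensionality => m; apply: propositional_extensionality; split.
  elim=> [|i s _ IH]; first by exists 0, 0.
  apply: natcomb2_add _ IH; case: i => [|i].
    by exists 1, 0; rewrite addn0 mul1n mul0n addn0.
  apply/(natcomb2E SF_coprime_gens (k:=1)); [lia | by rewrite mul1n SF_gen_modS |].
  rewrite mul1n leq_add2r /B -expnM -expnSr !leq_exp2l //; lia.
move=> [x [y ->]]; elim: x => [|x IHx].
  elim: y => [|y IHy]; first exact: SF0.
  have := SFadd 1 IHy; rewrite [n + 1]addn1 expnSr expnM -/B !mul0n !add0n.
  by rewrite mulSn.
have := SFadd 0 IHx; rewrite [n + 0]addn0 -/B.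
by rewrite mulSn addnA.
Qed.

End FermatLikeSemigroup.

Theorem mainTheorem20 (b n : nat) (hb2 : 2 <= b) (hbe : ~~ odd b) :
  let f0 := b ^ (b ^ n) + 1 in
  let f1 := b ^ (b ^ n.+1) + 1 in
  (forall s, Apery (SF b n) f0 s <-> exists2 k, k <= b ^ (b ^ n) & s = k * f1)
  /\ is_frobenius (SF b n) (b ^ (b ^ n) * f1 - f0)
  /\ b ^ (b ^ n) * f1 - f0 = b ^ ((b + 1) * b ^ n) - 1
  /\ is_genus (SF b n) (b ^ ((b + 1) * b ^ n) %/ 2).
Proof.
move=> f0 f1.
have B_gt1 := SF_base_gt1 n hb2; have cop := SF_coprime_gens n hb2 hbe.
rewrite SF_natcomb2 //; set B := b ^ b ^ n in f0 f1 B_gt1 cop *.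
have f1E : f1 = B ^ b + 1 by rewrite /f1 expnSr expnM.
have a_gt1 : 1 < B + 1 by lia.
have c_gt1 : 1 < B ^ b + 1 by rewrite addn1 ltnS expn_gt0; lia.
have FE : B * f1 - f0 = (B + 1) * (B ^ b + 1) - (B + 1) - (B ^ b + 1).
  by rewrite f1E /f0 mulnDl mul1n; lia.
have F_pow : B * f1 - f0 = b ^ ((b + 1) * b ^ n) - 1.
  by rewrite [(b + 1) * _]mulnC expnM -/B expnD expn1 f1E /f0 mulnDr muln1 mulnC; lia.
split; [|split; [|split]].
- move=> s; rewrite (apery_natcomb2 (ltnW a_gt1) cop) f1E.
  by split=> -[k le_kB ->]; exists k => //; lia.
- by rewrite FE; apply: frobenius_natcomb2.
- exact: F_pow.
- have := genus_natcomb2 a_gt1 c_gt1 cop.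
  by rewrite -FE F_pow subn1 prednK // expn_gt0; lia.
Qed.
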